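(* Let $H$ be a real Hilbert space, $C\subset H$ nonempty closed convex, and $A,F:H\to H$ such that: (A1) $A$ is $\lambda$-strongly monotone and $L_A$-Lipschitz continuous, $F$ is $L_F$-Lipschitz continuous, and $A$, $F$ are sequentially weak-to-weak continuous; (A2) the couple $(A,F)$ is monotone; (A3) the solution set $\mathrm{Sol}(A,F,C)$ of $\mathrm{GVI}(A,F,C)$ is nonempty and $\mathcal C:=A(\mathrm{Sol}(A,F,C))$ is convex. Let $\mathcal A:=A^{-1}$, let $u^\dagger$ be the unique solution of the problem: find $u\in\mathcal C$ with $\langle\mathcal Au,v-u\rangle\ge0$ for all $v\in\mathcal C$, and let $x^\dagger:=\mathcal Au^\dagger$. For $\alpha>0$ let $F_\alpha:=F+\alpha I$ and let $x_\alpha$ be the unique solution of $\mathrm{GVI}(A,F_\alpha,C)$. Then: (i) the net $\{x_\alpha\}_{\alpha>0}$ is bounded on $(0,\infty)$; (ii) $x_\alpha\to x^\dagger$ (in norm) as $\alpha\to0$, and $x^\dagger\in\mathrm{Sol}(A,F,C)$; (iii) there exists $M>0$ such that $\|x_\alpha-x_\beta\|\le \dfrac{M|\alpha-\beta|}{\beta}$ for all $\alpha,\beta>0$.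
   Context: $\mathrm{GVI}(A,F,C)$: find $x^*\in H$ with $Fx^*\in C$ and $\langle Ax^*,y-Fx^*\rangle\ge0$ for all $y\in C$; its solution set is $\mathrm{Sol}(A,F,C)$. The couple $(A,F)$ is monotone if $\langle Ax-Ay,Fx-Fy\rangle\ge0$ for all $x,y\in H$. An operator is sequentially weak-to-weak continuous if $x^k\rightharpoonup\bar x$ implies $Ax^k\rightharpoonup A\bar x$. Under these assumptions $A$ is invertible, $\mathcal A=A^{-1}$ is Lipschitz and strongly monotone, so $u^\dagger$ exists and is unique; and for each $\alpha>0$ the couple $(A,F_\alpha)$ is $\alpha\lambda$-strongly monotone, so $x_\alpha$ exists and is unique. *)

From HB Require Import structures.
From mathcomp Require Import all_boot all_order all_algebra.
From mathcomp Require Import all_classical all_reals all_analysis.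
Set Implicit Arguments. Unset Strict Implicit. Unset Printing Implicit Defensive.
Import Order.TTheory GRing.Theory Num.Theory.
Import numFieldNormedType.Exports.
Local Open Scope classical_set_scope.
Local Open Scope ring_scope.

(* A real Hilbert space is modelled as a complete normed space V over a
   realType R together with a (real) inner product [ip] inducing its norm. *)
Definition is_inner_product (R : realType) (V : normedModType R)
  (ip : V -> V -> R) : Prop :=
  [/\ (forall x y, ip x y = ip y x),
      (forall (a : R) x y z, ip (a *: x + y) z = a * ip x z + ip y z)
    & (forall x, ip x x = `|x| ^+ 2)].

Definition strongly_monotone (R : realType) (V : normedModType R)
  (ip : V -> V -> R) (A : V -> V) (lam : R) : Prop :=
  forall x y, lam * `|x - y| ^+ 2 <= ip (A x - A y) (x - y).

Definition lipschitz_with (R : realType) (V : normedModType R)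
  (A : V -> V) (L : R) : Prop :=
  forall x y, `|A x - A y| <= L * `|x - y|.

Definition weak_cvg (R : realType) (V : normedModType R)
  (ip : V -> V -> R) (u : nat -> V) (x : V) : Prop :=
  forall y, (fun k => ip (u k) y) @ \oo --> ip x y.

Definition seq_weak_weak_continuous (R : realType) (V : normedModType R)
  (ip : V -> V -> R) (A : V -> V) : Prop :=
  forall (u : nat -> V) (x : V), weak_cvg ip u x -> weak_cvg ip (A \o u) (A x).

Definition couple_monotone (R : realType) (V : normedModType R)
  (ip : V -> V -> R) (A F : V -> V) : Prop :=
  forall x y, 0 <= ip (A x - A y) (F x - F y).

Definition GVI_sol (R : realType) (V : normedModType R)
  (ip : V -> V -> R) (A F : V -> V) (C : set V) : set V :=
  [set x | C (F x) /\ forall y, C y -> 0 <= ip (A x) (y - F x)].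

From HB Require Import structures.
From mathcomp Require Import all_boot all_order all_algebra.
From mathcomp Require Import all_classical all_reals all_analysis.
From mathcomp Require Import ring lra.
Set Implicit Arguments. Unset Strict Implicit. Unset Printing Implicit Defensive.
Import Order.TTheory GRing.Theory Num.Theory.
Import numFieldNormedType.Exports.
Local Open Scope classical_set_scope.
Local Open Scope ring_scope.

(* Testing the variational inequality of x_a with x_b and conversely, the
   monotonicity of (A, F) gives <A x_a - A x_b, a x_a - b x_b> <= 0 for all
   a, b >= 0 (b = 0 meaning a solution of GVI(A, F, C)).  With strong
   monotonicity of A this bounds x_a (part (i)) and makes a |-> x_a Lipschitz
   away from 0 (part (iii)).  For (ii), every weak limit of x_a along a -> 0 solves
   GVI(A, F, C), by weak-to-weak continuity and the monotonicity of (A, F) and A,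
   while lam |x_a - x^dagger|^2 <= <A x^dagger - A x_a, x^dagger>, whose limit
   along a weakly convergent subsequence is <= 0 by the minimality of u^dagger.
   Weak sequential compactness of bounded sequences is proved from the projection
   theorem: a diagonal subsequence makes every <x_k, x_m> converge, its weak limit
   is a point of the nested closed convex sets of bounds valid for its tails, and
   projecting onto the closed subspace where convergence holds handles all other
   test vectors. *)

Lemma increasing_seq_ge (f : nat -> nat) : increasing_seq f -> forall n, (n <= f n)%N.
Proof.
by move=> /increasing_seqP f_incr; elim=> // n IHn; exact: leq_ltn_trans IHn (f_incr n).
Qed.

Lemma increasing_seq_comp (f g : nat -> nat) :
  increasing_seq f -> increasing_seq g -> increasing_seq (f \o g).
Proof. by move=> f_incr g_incr n m; exact: etrans (f_incr _ _) (g_incr _ _). Qed.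

Lemma increasing_seq_cvgy (f : nat -> nat) : increasing_seq f -> f @ \oo --> \oo.
Proof.
move=> f_incr; apply/cvgnyPge => N; near=> n.
by apply: leq_trans (increasing_seq_ge f_incr n); near: n; exact: nbhs_infty_ge.
Unshelve. all: by end_near. Qed.

Lemma diagonal_subseq (R : realType) (s : nat -> R^nat) :
  (forall m, bounded_fun (s m)) ->
  exists2 phi : nat -> nat, increasing_seq phi & forall m, cvgn (s m \o phi).
Proof.
move=> s_bnd.
have /choice[E E_P] (mpsi : nat * (nat -> nat)) :
    exists chi, increasing_seq chi /\ cvgn (s mpsi.1 \o mpsi.2 \o chi).
  have /bolzano_weierstrass[chi ? ?] : bounded_fun (s mpsi.1 \o mpsi.2).
    by move: (s_bnd mpsi.1); rewrite /bounded_near; apply: filterS => M sM n _; exact: sM.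
  by exists chi.
pose Phi := fix Phi m := if m is m'.+1 then Phi m' \o E (m', Phi m') else id.
have Phi_incr m : increasing_seq (Phi m).
  elim: m => [//|m IHm]; exact: increasing_seq_comp IHm (E_P _).1.
have Phi_sub m d : exists2 chi, increasing_seq chi & Phi (d + m)%N = Phi m \o chi.
  elim: d => [|d [chi chi_incr Phi_dm]]; first by exists id.
  exists (chi \o E (d + m, Phi (d + m)%N)); first exact: increasing_seq_comp chi_incr (E_P _).1.
  by rewrite addSn /= {1}Phi_dm.
exists (fun k => Phi k k).
  apply/increasing_seqP => k /=; rewrite (leW_mono (Phi_incr k)).
  exact: increasing_seq_ge (E_P _).1 k.+1.
move=> m; have /cvg_ex[l sl] := (E_P (m, Phi m)).2.
apply/cvg_ex; exists l; apply/cvgrPdist_lt => e e0.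
have [N _ sN] := (cvgrPdist_lt _ _).1 sl e e0.
near=> k; have mk : (m.+1 <= k)%N by near: k; exact: nbhs_infty_ge.
have [chi chi_incr Phi_k] := Phi_sub m.+1 (k - m.+1)%N.
rewrite /= -{1}(subnK mk) Phi_k; apply: sN.
by apply: leq_trans (increasing_seq_ge chi_incr k); near: k; exact: nbhs_infty_ge.
Unshelve. all: by end_near. Qed.

Lemma cvg_at_right_seq (R : realType) (V : normedModType R) (f : R -> V) (a : R) (l : V) :
  (forall (u : R^nat) (e : R), (forall n, a < u n) -> u @ \oo --> a -> 0 < e ->
     exists n, `|f (u n) - l| < e) ->
  f x @[x --> a^'+] --> l.
Proof.
move=> seqP; apply/cvgrPdist_lt => e e0; apply: contrapT => f_far.
have /choice[u uP] n : exists t, a < t < a + harmonic n /\ e <= `|l - f t|.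
  apply: contrapT => /forallNP t_near; apply: f_far.
  exists (harmonic n) => //= t /= at_ ta; rewrite ltNge; apply/negP => ft.
  by apply: (t_near t); move: at_; rewrite distrC ltr_distl ta => /andP[_ ->].
have au n : a < u n by have /andP[] := (uP n).1.
have ua : u @ \oo --> a.
  apply: (@squeeze_cvgr _ _ _ _ (fun=> a) (fun n => a + harmonic n)).
  - by near=> n; have /andP[/ltW -> /ltW ->] := (uP n).1.
  - exact: cvg_cst.
  - by rewrite -[X in _ --> X]addr0; apply: cvgD; [exact: cvg_cst|exact: cvg_harmonic].
have [n] := seqP u e au ua e0; rewrite distrC ltNge.
by have [_ ->] := uP n.
Unshelve. all: by end_near. Qed.

Lemma le_div_of_sqr_le (R : realType) (lam d c : R) :
  0 < lam -> 0 <= d -> lam * d ^+ 2 <= c * d -> d <= `|c| / lam.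
Proof.
move=> lam0 d0 dc; rewrite ler_pdivlMr //.
have [->|dn0] := eqVneq d 0; first by rewrite mul0r.
have dp : 0 < d by rewrite lt_neqAle eq_sym dn0.
have := ler_norm c; rewrite -(ler_pM2r dp); nra.
Qed.

Lemma convex_setP (R : realType) (V : lmodType R) (K : set V) :
  convex_set (K : set (convex_lmodType V)) <->
  forall a b (t : R), K a -> K b -> 0 <= t <= 1 -> K (t *: a + (1 - t) *: b).
Proof.
split=> [cK a b t Ka Kb /andP[t0 t1]|cK a b t].
  by have := cK a b (Itv01 t0 t1); rewrite !inE; apply.
by rewrite !inE => Ka Kb; apply: cK => //; rewrite ge0 le1.
Qed.

Lemma cauchy_seq_cvgn (R : realType) (V : completeNormedModType R) (u : V^nat) :
  (forall e, 0 < e -> \forall m & n \near \oo, `|u m - u n| < e) -> cvgn u.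
Proof.
move=> u_cauchy; apply: cauchy_cvg; apply/cauchy_ballP => e e0.
by rewrite -ball_normE; near_simpl; exact: u_cauchy.
Qed.

Section inner_product.
Context {R : realType} {V : normedModType R} (ip : V -> V -> R).
Hypothesis ipP : is_inner_product ip.

Lemma ipC x y : ip x y = ip y x.
Proof. by case: ipP. Qed.

Lemma ipxx x : ip x x = `|x| ^+ 2.
Proof. by case: ipP. Qed.

Lemma ipDl x y z : ip (x + y) z = ip x z + ip y z.
Proof. by case: ipP => _ lin _; have := lin 1 x y z; rewrite scale1r mul1r. Qed.

Lemma ip0l z : ip 0 z = 0.
Proof. by apply: (@addrI _ (ip 0 z)); rewrite -ipDl !addr0. Qed.

Lemma ipZl a x z : ip (a *: x) z = a * ip x z.
Proof. by case: ipP => _ lin _; have := lin a x 0 z; rewrite addr0 ip0l addr0. Qed.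

Lemma ipNl x z : ip (- x) z = - ip x z.
Proof. by rewrite -scaleN1r ipZl mulN1r. Qed.

Lemma ipBl x y z : ip (x - y) z = ip x z - ip y z.
Proof. by rewrite ipDl ipNl. Qed.

Lemma ipDr x y z : ip z (x + y) = ip z x + ip z y.
Proof. by rewrite ipC ipDl !(ipC z). Qed.

Lemma ip0r z : ip z 0 = 0.
Proof. by rewrite ipC ip0l. Qed.

Lemma ipZr a x z : ip z (a *: x) = a * ip z x.
Proof. by rewrite ipC ipZl ipC. Qed.

Lemma ipNr x z : ip z (- x) = - ip z x.
Proof. by rewrite ipC ipNl ipC. Qed.

Lemma ipBr x y z : ip z (x - y) = ip z x - ip z y.
Proof. by rewrite ipDr ipNr. Qed.

Lemma sqr_normB x y : `|x - y| ^+ 2 = `|x| ^+ 2 - 2 * ip x y + `|y| ^+ 2.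
Proof. by rewrite -!ipxx ipBl !ipBr (ipC y x); ring. Qed.

Lemma ip_le_normM x y : ip x y <= `|x| * `|y|.
Proof.
have := sqr_normB x y; have := normr_ge0 x; have := normr_ge0 y.
have : (`|x| - `|y|) ^+ 2 <= `|x - y| ^+ 2.
  by rewrite -real_normK ?num_real // lerXn2r ?nnegrE ?ler_dist_dist.
nra.
Qed.

Lemma normr_ip_le x y : `|ip x y| <= `|x| * `|y|.
Proof.
rewrite ler_norml ip_le_normM andbT lerNl -ipNr.
by rewrite -[`|y|]normrN ip_le_normM.
Qed.

Lemma ip_self_le0 x : ip x x <= 0 -> x = 0.
Proof.
rewrite ipxx => x2_le0; apply/normr0_eq0/eqP.
by rewrite -sqrf_eq0 eq_le x2_le0 sqr_ge0.
Qed.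

Lemma sqr_normBZ x y a :
  `|x - a *: y| ^+ 2 = `|x| ^+ 2 - 2 * a * ip x y + a ^+ 2 * `|y| ^+ 2.
Proof. by rewrite sqr_normB ipZr normrZ exprMn real_normK ?num_real //; ring. Qed.

Lemma ipl_continuous y : continuous (ip ^~ y).
Proof.
move=> x; apply/cvgrPdist_le => e e0.
have ey : 0 < e / (`|y| + 1) by rewrite divr_gt0 // ltr_wpDl.
near=> t; rewrite -ipBl; apply: le_trans (normr_ip_le _ _) _.
have : `|x - t| <= e / (`|y| + 1) by near: t; exact: cvgr_dist_le.
rewrite ler_pdivlMr ?ltr_wpDl //; have := normr_ge0 (x - t); nra.
Unshelve. all: by end_near. Qed.

Lemma closed_ip_le y r : closed [set x | ip x y <= r].
Proof.
have := @preimage_closed _ _ (ip ^~ y) [set s | s <= r].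
by apply => // x _; exact: ipl_continuous.
Qed.

Lemma closed_ip_cvg_set (z : V^nat) (p : V) (B : R) : (forall k, `|z k| <= B) ->
  closed [set w | ip (z k) w @[k --> \oo] --> ip p w].
Proof.
move=> zB w w_cl; apply/cvgrPdist_lt => e e0.
have B0 : 0 <= B := le_trans (normr_ge0 _) (zB 0%N).
pose d := e / (3 * (B + `|p| + 1)).
have Bp0 : 0 < B + `|p| + 1 by have := normr_ge0 p; lra.
have d0 : 0 < d by rewrite divr_gt0 // mulr_gt0.
have [c [zc /= wc]] := w_cl _ (nbhsx_ballx w d d0).
have e3 : 0 < e / 3 by rewrite divr_gt0.
near=> k.
have zck : `|ip p c - ip (z k) c| < e / 3 by near: k; exact: (cvgrPdist_lt _ _).1 zc _ e3.
rewrite -ball_normE /= in wc.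
have -> : ip p w - ip (z k) w = ip p (w - c) + (ip p c - ip (z k) c) + ip (z k) (c - w).
  by rewrite !ipBr; ring.
have pwc := normr_ip_le p (w - c); have zcw := normr_ip_le (z k) (c - w).
rewrite distrC in zcw.
have dB : d * (B + `|p| + 1) = e / 3 by rewrite /d invfM mulrA mulfVK // gt_eqF.
have := zB k; have := normr_ge0 p; have := normr_ge0 (w - c).
have := ler_normD (ip p (w - c) + (ip p c - ip (z k) c)) (ip (z k) (c - w)).
have := ler_normD (ip p (w - c)) (ip p c - ip (z k) c).
nra.
Unshelve. all: by end_near. Qed.

End inner_product.

Section hilbert_space.
Context {R : realType} {V : completeNormedModType R} (ip : V -> V -> R).
Hypothesis ipP : is_inner_product ip.

Lemma exists_nearest_point (K : set V) :
  K !=set0 -> convex_set (K : set (convex_lmodType V)) -> closed K ->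
  forall z, exists2 p, K p & forall c, K c -> `|z - p| ^+ 2 <= `|z - c| ^+ 2.
Proof.
move=> [c0 Kc0] /convex_setP cK clK z.
pose D := [set `|z - c| ^+ 2 | c in K].
have infD : has_inf D by split; [exists (`|z - c0| ^+ 2), c0|exists 0 => _ [c _ <-]].
pose d := inf D.
have d_le c : K c -> d <= `|z - c| ^+ 2 by move=> Kc; apply: ge_inf; [case: infD|exists c].
have /choice[cs /all_and2[Kcs cs_d]] n :
    exists c, K c /\ `|z - c| ^+ 2 < d + harmonic n.
  by have [_ [c Kc <-] ?] := inf_adherent (harmonic_gt0 n) infD; exists c.
(* Parallelogram law at the midpoint of [cs m] and [cs n]. *)
have cs_close m n : `|cs m - cs n| ^+ 2 <= 2 * harmonic m + 2 * harmonic n.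
  have : K (2^-1 *: cs m + (1 - 2^-1) *: cs n) by apply: cK; rewrite // invr_ge0 invf_le1 //; lra.
  have -> : 2^-1 *: cs m + (1 - 2^-1) *: cs n = cs n + 2^-1 *: (cs m - cs n).
    by rewrite scalerBr scalerBl scale1r addrCA addrA.
  move/d_le; rewrite opprD addrA (sqr_normBZ ipP).
  have := sqr_normB ipP (z - cs n) (cs m - cs n).
  rewrite opprB addrA subrK => zm.
  have -> : (2^-1 : R) ^+ 2 = 4^-1 by rewrite exprVn; lra.
  have := cs_d m; have := cs_d n; lra.
have /cvg_ex[p csp] : cvgn cs.
  apply: cauchy_seq_cvgn => e e0.
  have h0 : \forall n \near \oo, harmonic n < e ^+ 2 / 4 :> R.
    by apply: (cvgr_lt 0); [exact: cvg_harmonic|rewrite divr_gt0 ?exprn_gt0].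
  near=> m n; rewrite -(@ltr_pXn2r _ 2) ?nnegrE ?(ltW e0) //; apply: le_lt_trans (cs_close m n) _.
  have : harmonic m < e ^+ 2 / 4 :> R by near: m.
  have : harmonic n < e ^+ 2 / 4 :> R by near: n.
  lra.
exists p => [|c Kc]; first by apply: (closed_cvg _ clK _ _ csp); exact: nearW.
apply: le_trans (d_le _ Kc).
apply: (ler_cvg_to (a := \oo) (f := fun n => `|z - cs n| ^+ 2)).
- have zcs : `|z - cs n| @[n --> \oo] --> `|z - p|.
    by apply: cvg_norm; apply: cvgB => //; exact: cvg_cst.
  by rewrite expr2; under eq_fun do rewrite expr2; exact: cvgM.
- by rewrite -[X in _ --> X]addr0; apply: cvgD => //; [exact: cvg_cst|exact: cvg_harmonic].
- by near=> n; exact/ltW/cs_d.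
Unshelve. all: by end_near. Qed.

Lemma exists_projection (K : set V) :
  K !=set0 -> convex_set (K : set (convex_lmodType V)) -> closed K ->
  forall z, exists2 p, K p & forall c, K c -> ip (z - p) (c - p) <= 0.
Proof.
move=> K0 cK clK z; have [p Kp p_min] := exists_nearest_point K0 cK clK z.
exists p => // c Kc; rewrite leNgt; apply/negP => g_gt0.
set g := ip (z - p) (c - p) in g_gt0; set w := `|c - p| ^+ 2.
have w_ge0 : 0 <= w := sqr_ge0 _.
(* Moving from [p] towards [c] by [t] changes the squared distance to [z] by
   [t * (t * w - 2 * g)], which is negative for this [t]. *)
pose t := g / (w + g).
have t_gt0 : 0 < t by rewrite divr_gt0 //; lra.
have t_le1 : t <= 1 by rewrite ler_pdivrMr; lra.
have tw_lt_g : t * w < g by rewrite /t mulrAC ltr_pdivrMr; nra.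
have : K (t *: c + (1 - t) *: p) by move/convex_setP: cK; apply => //; rewrite ltW.
have -> : t *: c + (1 - t) *: p = p + t *: (c - p).
  by rewrite scalerBr scalerBl scale1r addrCA addrA.
move/p_min; rewrite opprD addrA (sqr_normBZ ipP) -/g -/w; nra.
Qed.

Lemma exists_orthogonal_projection (G : set V) :
  G 0 -> (forall a u v, G u -> G v -> G (a *: u + v)) -> closed G ->
  forall y, exists2 s, G s & forall c, G c -> ip (y - s) c = 0.
Proof.
move=> G0 linG clG y.
have cG : convex_set (G : set (convex_lmodType V)).
  by apply/convex_setP => a b t Ga Gb _; rewrite -[_ *: b]addr0; apply/linG/linG.
have [s Gs sP] := exists_projection (ex_intro _ 0 G0) cG clG y.
exists s => // c Gc; apply/eqP; rewrite eq_le.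
have := sP _ (linG 1 _ _ Gc Gs); have := sP _ (linG (-1) _ _ Gc Gs).
by rewrite !addrK !(ipZr ipP) mul1r; lra.
Qed.

Lemma nested_closed_convex_bigcap_neq0 (K : nat -> set V) (B : R) :
  (forall n, K n !=set0) -> (forall n, convex_set (K n : set (convex_lmodType V))) ->
  (forall n, closed (K n)) -> (forall n m, (n <= m)%N -> K m `<=` K n) ->
  (forall n c, K n c -> `|c| <= B) -> \bigcap_n K n !=set0.
Proof.
move=> K0 cK clK decrK KB.
have /choice[ps /all_and2[Kps psP]] n :
    exists p, K n p /\ forall c, K n c -> ip (0 - p) (c - p) <= 0.
  by have [p ? ?] := exists_projection (K0 n) (cK n) (clK n) 0; exists p.
have ps_le n c : K n c -> `|ps n| ^+ 2 <= ip (ps n) c.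
  by move/psP; rewrite sub0r (ipNl ipP) (ipBr ipP) (ipxx ipP); lra.
pose q n := `|ps n| ^+ 2.
have ps_dist n m : (n <= m)%N -> `|ps m - ps n| ^+ 2 <= q m - q n.
  move=> nm; have := ps_le n _ (decrK _ _ nm _ (Kps m)).
  by rewrite /q (sqr_normB ipP) (ipC ipP (ps m)); lra.
have q_incr : nondecreasing_seq q.
  by move=> n m nm; rewrite -subr_ge0; exact: le_trans (sqr_ge0 _) (ps_dist n m nm).
have q_cvg : cvgn q.
  apply: nondecreasing_is_cvgn => //; exists (B ^+ 2) => _ [n _ <-].
  have B0 : 0 <= B := le_trans (normr_ge0 _) (KB _ _ (Kps 0%N)).
  by rewrite /q lerXn2r ?nnegrE //; exact: KB (Kps n).
have /cvg_ex[p psp] : cvgn ps.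
  apply: cauchy_seq_cvgn => e e0.
  have q_near : \forall n \near \oo, limn q - e ^+ 2 < q n.
    by apply: cvgr_gt; [exact: q_cvg|rewrite gtrBl exprn_gt0].
  have q_le n : q n <= limn q := nondecreasing_cvgn_le q_incr q_cvg n.
  near=> m n; rewrite -(@ltr_pXn2r _ 2) ?nnegrE ?(ltW e0) //.
  have : limn q - e ^+ 2 < q m by near: m.
  have : limn q - e ^+ 2 < q n by near: n.
  have [mn|/ltnW nm] := leqP m n.
    by rewrite distrC; have := ps_dist _ _ mn; have := q_le n; lra.
  by have := ps_dist _ _ nm; have := q_le m; lra.
exists p => n _; apply: (closed_cvg _ (clK n) _ _ psp).
by near=> m; apply: decrK (Kps m); near: m; exact: nbhs_infty_ge.
Unshelve. all: by end_near. Qed.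

Lemma weak_cvg_closed_convex (K : set V) (v : V^nat) w :
  convex_set (K : set (convex_lmodType V)) -> closed K ->
  (forall k, K (v k)) -> weak_cvg ip v w -> K w.
Proof.
move=> cK clK Kv vw.
have [p Kp pP] := exists_projection (ex_intro _ _ (Kv 0%N)) cK clK w.
suff /(ip_self_le0 ipP)/eqP : ip (w - p) (w - p) <= 0 by rewrite subr_eq0 => /eqP->.
rewrite (ipBl ipP) subr_le0.
apply: (ler_cvg_to (vw (w - p)) (cvg_cst _)); near=> k.
by have := pP _ (Kv k); rewrite (ipC ipP) (ipBl ipP) subr_le0.
Unshelve. all: by end_near. Qed.

Lemma exists_ip_limit_repr (z : V^nat) (B : R) : (forall k, `|z k| <= B) ->
  exists p, forall y l, ip (z k) y @[k --> \oo] --> l -> ip p y = l.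
Proof.
move=> zB; have B0 : 0 <= B := le_trans (normr_ge0 _) (zB 0%N).
(* A point of every [K n] satisfies every bound on [ip (z k) y] that holds eventually. *)
pose K n := \bigcap_(yr in [set yr | forall k, (n <= k)%N -> ip (z k) yr.1 <= yr.2])
  [set c | ip c yr.1 <= yr.2].
have [p Kp] : \bigcap_n K n !=set0.
  apply: (@nested_closed_convex_bigcap_neq0 _ B) => [n|n|n|n m nm c Kc yr yrP|n c Kc].
  - by exists (z n) => yr /= yrP; exact: yrP.
  - apply/convex_setP => a b t Ka Kb /andP[t0 t1] yr yrP /=.
    by rewrite (ipDl ipP) !(ipZl ipP); have /= := Ka _ yrP; have /= := Kb _ yrP; nra.
  - by apply: closed_bigI => yr _; exact: closed_ip_le.
  - by apply: Kc => k mk; apply: yrP; exact: leq_trans mk.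
  - have : ip c c <= B * `|c|.
      apply: (Kc (c, B * `|c|)) => k _ /=; apply: le_trans (ip_le_normM ipP _ _) _.
      by rewrite ler_wpM2r.
    by rewrite (ipxx ipP) expr2; have := normr_ge0 c; nra.
have p_le y r : (\forall k \near \oo, ip (z k) y <= r) -> ip p y <= r.
  by move=> [n _ zn]; apply: (Kp n I (y, r)) => k; exact: zn.
exists p => y l zl; apply/eqP; rewrite eq_le; apply/andP; split.
  apply/ler_addgt0Pr => e e0; apply: p_le.
  by near=> k; apply/ltW; near: k; apply: (cvgr_lt l) => //; rewrite ltrDl.
rewrite -lerN2 -(ipNr ipP); apply/ler_addgt0Pr => e e0; apply: p_le.
near=> k; rewrite (ipNr ipP); apply/ltW; near: k.
by apply: (cvgr_lt (- l)); [exact: cvgN|rewrite ltrDl].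
Unshelve. all: by end_near. Qed.

Lemma weak_cvg_subseq (x : V^nat) (B : R) : (forall n, `|x n| <= B) ->
  exists2 phi : nat -> nat, increasing_seq phi & exists xb, weak_cvg ip (x \o phi) xb.
Proof.
move=> xB; have ip_bnd m : bounded_fun (fun n => ip (x n) (x m)).
  rewrite /bounded_near; near=> M => n _; apply: le_trans (normr_ip_le ipP _ _) _.
  apply: le_trans (ler_pM (normr_ge0 _) (normr_ge0 _) (xB n) (xB m)) _.
  by near: M; apply: nbhs_pinfty_ge; exact: num_real.
have [phi phi_incr phi_cvg] := diagonal_subseq ip_bnd.
pose z := x \o phi; have zB k : `|z k| <= B := xB (phi k).
have [p p_lim] := exists_ip_limit_repr zB.
pose G := [set w | ip (z k) w @[k --> \oo] --> ip p w].
have Gx m : G (x m).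
  by have /cvg_ex[l zl] := phi_cvg m; rewrite /G /= (p_lim _ _ zl).
have G0 : G 0.
  by rewrite /G /= (ip0r ipP); under eq_fun do rewrite (ip0r ipP); exact: cvg_cst.
have linG a u v : G u -> G v -> G (a *: u + v).
  rewrite /G /= (ipDr ipP) (ipZr ipP) => Gu Gv.
  under eq_fun do rewrite (ipDr ipP) (ipZr ipP).
  by apply: cvgD => //; apply: cvgM => //; exact: cvg_cst.
exists phi => //; exists p => y.
have [s Gs sP] := exists_orthogonal_projection G0 linG (closed_ip_cvg_set ipP (p := p) zB) y.
have zy k : ip (z k) y = ip (z k) s.
  by apply/eqP; rewrite -subr_eq0 -(ipBr ipP) (ipC ipP) (sP _ (Gx (phi k))).
have py : ip p y = ip p s.
  apply/eqP; rewrite -subr_eq0 -(ipBr ipP); apply/eqP/p_lim.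
  by under eq_fun do rewrite (ipBr ipP) zy subrr; exact: cvg_cst.
by rewrite py; under eq_fun do rewrite zy.
Unshelve. all: by end_near. Qed.

End hilbert_space.

Section tikhonov_regularization.
Context {R : realType} {V : completeNormedModType R} (ip : V -> V -> R).
Context (C : set V) (A F : V -> V) (lam LA : R).
Hypotheses (ipP : is_inner_product ip) (lam_gt0 : 0 < lam).
Hypotheses (A_smono : strongly_monotone ip A lam) (A_lip : lipschitz_with A LA).
Hypothesis AF_mono : couple_monotone ip A F.
Hypotheses (C_closed : closed C) (C_convex : convex_set (C : set (convex_lmodType V))).
Hypotheses (A_weak : seq_weak_weak_continuous ip A) (F_weak : seq_weak_weak_continuous ip F).

Let ipE := (ipDl ipP, ipDr ipP, ipNl ipP, ipNr ipP, ipZl ipP, ipZr ipP).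

Local Notation Sol a := (GVI_sol ip A (fun x => F x + a *: x) C).

Lemma regularized_GVI_sol0 : Sol 0 = GVI_sol ip A F C.
Proof. by congr GVI_sol; apply/funext => x; rewrite scale0r addr0. Qed.

Lemma strongly_monotone_inj : injective A.
Proof.
move=> x y Axy; apply/eqP; rewrite -subr_eq0 -normr_eq0 -sqrf_eq0 eq_le sqr_ge0 andbT.
by rewrite -(pmulr_rle0 _ lam_gt0); apply: le_trans (A_smono x y) _; rewrite Axy subrr (ip0l ipP).
Qed.

Lemma regularized_sols_ip_le0 a b x y :
  Sol a x -> Sol b y -> ip (A x - A y) (a *: x - b *: y) <= 0.
Proof.
move=> [Cx xP] [Cy yP]; have := xP _ Cy; have := yP _ Cx; have := AF_mono x y.
by rewrite !ipE; lra.
Qed.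

Lemma regularized_sol_ip_sol_le0 a x xs :
  0 < a -> Sol a x -> GVI_sol ip A F C xs -> ip (A x - A xs) x <= 0.
Proof.
rewrite -regularized_GVI_sol0 => a0 x_sol xs_sol.
have := regularized_sols_ip_le0 x_sol xs_sol.
by rewrite scale0r subr0 (ipZr ipP) pmulr_rle0.
Qed.

Lemma regularized_sol_sqr_dist_le a x xs : 0 < a -> Sol a x -> GVI_sol ip A F C xs ->
  lam * `|x - xs| ^+ 2 <= ip (A xs - A x) xs.
Proof.
move=> a0 x_sol xs_sol; apply: le_trans (A_smono x xs) _.
have := regularized_sol_ip_sol_le0 a0 x_sol xs_sol.
by rewrite !ipE; lra.
Qed.

Lemma regularized_sol_dist_le a x xs : 0 < a -> Sol a x -> GVI_sol ip A F C xs ->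
  `|x - xs| <= `|LA| * `|xs| / lam.
Proof.
move=> a0 x_sol xs_sol; rewrite -[`|xs|]normr_id -normrM.
apply: le_div_of_sqr_le lam_gt0 (normr_ge0 _) _.
apply: le_trans (regularized_sol_sqr_dist_le a0 x_sol xs_sol) _.
apply: le_trans (ip_le_normM ipP _ _) _; rewrite mulrAC ler_wpM2r // distrC.
exact: A_lip.
Qed.

Lemma regularized_sol_lipschitz a b x y M : 0 < a -> 0 < b -> 0 <= M -> `|x| <= M ->
  Sol a x -> Sol b y -> `|x - y| <= `|LA| * M / lam * `|a - b| / b.
Proof.
move=> a0 b0 M0 xM x_sol y_sol.
have key : b * ip (A x - A y) (x - y) <= (b - a) * ip (A x - A y) x.
  by have := regularized_sols_ip_le0 x_sol y_sol; rewrite !ipE; lra.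
have s1 : lam * b * `|x - y| ^+ 2 <= b * ip (A x - A y) (x - y).
  by rewrite mulrAC mulrC ler_pM2l //; exact: A_smono.
have s2 : (b - a) * ip (A x - A y) x <= `|b - a| * (`|A x - A y| * `|x|).
  by apply: le_trans (ler_norm _) _; rewrite normrM ler_wpM2l ?normr_ge0 ?normr_ip_le.
have s3 : `|A x - A y| * `|x| <= LA * `|x - y| * M.
  by apply: ler_pM => //; exact: normr_ge0.
have : lam * b * `|x - y| ^+ 2 <= `|b - a| * LA * M * `|x - y|.
  have := le_trans s1 (le_trans key s2); have := normr_ge0 (b - a); nra.
move/(le_div_of_sqr_le (mulr_gt0 lam_gt0 b0) (normr_ge0 _))/le_trans; apply.
rewrite !normrM normr_id (ger0_norm M0) (distrC b).
rewrite [X in _ <= X](_ : _ = `|a - b| * `|LA| * M / (lam * b)) //.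
by field; rewrite !gt_eqF.
Qed.

Lemma weak_limit_regularized_sol (a : R^nat) (y : V^nat) xb :
  (forall k, 0 < a k) -> a @ \oo --> 0 -> (forall k, Sol (a k) (y k)) ->
  weak_cvg ip y xb -> GVI_sol ip A F C xb.
Proof.
move=> a_gt0 a0 y_sol yw.
have Ay v : ip (A (y k)) v @[k --> \oo] --> ip (A xb) v by exact: A_weak.
have Fy v : ip (F (y k)) v @[k --> \oo] --> ip (F xb) v by exact: F_weak.
have FxbC : C (F xb).
  apply: (weak_cvg_closed_convex ipP C_convex C_closed (fun k => (y_sol k).1)) => v.
  rewrite -[X in _ --> X]addr0 -(mul0r (ip xb v)); under eq_fun do rewrite !ipE.
  by apply: cvgD; [exact: Fy|exact: cvgM].
split=> // c Cc.
(* By monotonicity of [(A, F)] and of [A], [r k] bounds the variational inequality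
   of [y k] at [c] from below, and it only involves weakly convergent terms. *)
pose r k := ip (A (y k)) c - ip (A (y k)) (F xb) - ip (F (y k)) (A xb) + ip (A xb) (F xb)
  - a k * (ip (A (y k)) xb + ip (y k) (A xb) - ip (A xb) xb).
have r_ge0 k : 0 <= r k.
  have A_mono : 0 <= ip (A (y k) - A xb) (y k - xb).
    exact: le_trans (mulr_ge0 (ltW lam_gt0) (sqr_ge0 _)) (A_smono _ _).
  have := (y_sol k).2 c Cc; have := AF_mono (y k) xb; have := a_gt0 k.
  move: A_mono; rewrite /r !ipE (ipC ipP (F (y k))) (ipC ipP (y k)); nra.
have r_cvg : r k @[k --> \oo] --> ip (A xb) (c - F xb).
  have -> : ip (A xb) (c - F xb) = ip (A xb) c - ip (A xb) (F xb) - ip (F xb) (A xb)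
      + ip (A xb) (F xb) - 0 * (ip (A xb) xb + ip xb (A xb) - ip (A xb) xb).
    by rewrite mul0r (ipC ipP (F xb)) (ipBr ipP); ring.
  apply: cvgB; first by apply: cvgD; [apply: cvgB; [apply: cvgB|]|exact: cvg_cst].
  by apply: cvgM => //; apply: cvgB; [apply: cvgD|exact: cvg_cst].
by apply: (ler_cvg_to (cvg_cst 0) r_cvg); near=> k; exact: r_ge0.
Unshelve. all: by end_near. Qed.

Lemma regularized_sol_cvg (xa : R -> V) (xdag : V) (M : R) :
  (forall a, 0 < a -> Sol a (xa a)) -> (forall a, 0 < a -> `|xa a| <= M) ->
  GVI_sol ip A F C xdag ->
  (forall x, GVI_sol ip A F C x -> 0 <= ip xdag (A x - A xdag)) ->
  xa a @[a --> 0^'+] --> xdag.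
Proof.
move=> xa_sol xaM xdag_sol xdag_min.
apply: cvg_at_right_seq => u e u_gt0 u0 e0; apply: contrapT => /forallNP far.
have [phi phi_incr [xb xbw]] := weak_cvg_subseq ipP (fun n => xaM _ (u_gt0 n)).
have uphi0 : (u \o phi) @ \oo --> 0 := cvg_comp _ _ (increasing_seq_cvgy phi_incr) u0.
have xb_sol : GVI_sol ip A F C xb.
  exact: (weak_limit_regularized_sol (fun k => u_gt0 (phi k)) uphi0
    (fun k => xa_sol _ (u_gt0 (phi k))) xbw).
have : lam * e ^+ 2 <= ip (A xdag - A xb) xdag.
  have Axa : ip (A xdag - A (xa (u (phi k)))) xdag @[k --> \oo] --> ip (A xdag - A xb) xdag.
    under eq_fun do rewrite (ipBl ipP).
    by rewrite (ipBl ipP); apply: cvgB; [exact: cvg_cst|exact: A_weak].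
  apply: (ler_cvg_to (cvg_cst _) Axa).
  near=> k.
  apply: le_trans (regularized_sol_sqr_dist_le (u_gt0 _) (xa_sol _ (u_gt0 _)) xdag_sol).
  by rewrite ler_pM2l // lerXn2r ?nnegrE ?(ltW e0) // leNgt; apply/negP; exact: far.
have := xdag_min _ xb_sol; have := mulr_gt0 lam_gt0 (exprn_gt0 2 e0).
by rewrite (ipC ipP) !(ipBl ipP); lra.
Unshelve. all: by end_near. Qed.

End tikhonov_regularization.

Theorem lemma3p2 (R : realType) (V : completeNormedModType R)
  (ip : V -> V -> R) (C : set V) (A F : V -> V) (lam LA LF : R)
  (udag xdag : V) (xa : R -> V) :
  is_inner_product ip ->
  C !=set0 -> closed C -> convex_set (C : set (convex_lmodType V)) ->
  (* (A1) *)
  0 < lam -> strongly_monotone ip A lam -> lipschitz_with A LA ->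
  lipschitz_with F LF ->
  seq_weak_weak_continuous ip A -> seq_weak_weak_continuous ip F ->
  (* (A2) *)
  couple_monotone ip A F ->
  (* (A3) *)
  GVI_sol ip A F C !=set0 ->
  convex_set (A @` GVI_sol ip A F C : set (convex_lmodType V)) ->
  (* u^dagger solves: u in A(Sol), <A^{-1} u, v - u> >= 0 for v in A(Sol);
     x^dagger = A^{-1} u^dagger, i.e. A x^dagger = u^dagger (A is injective) *)
  (A @` GVI_sol ip A F C) udag ->
  (forall v, (A @` GVI_sol ip A F C) v -> 0 <= ip xdag (v - udag)) ->
  A xdag = udag ->
  (* x_alpha solves GVI(A, F + alpha I, C) *)
  (forall alpha, 0 < alpha ->
     GVI_sol ip A (fun x => F x + alpha *: x) C (xa alpha)) ->
  [/\ (exists M : R, forall alpha, 0 < alpha -> `|xa alpha| <= M),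
      xa alpha @[alpha --> 0^'+] --> xdag,
      GVI_sol ip A F C xdag
    & exists M : R, 0 < M /\ forall alpha beta, 0 < alpha -> 0 < beta ->
        `|xa alpha - xa beta| <= M * `|alpha - beta| / beta].
Proof.
(* The Lipschitz continuity of F, the nonemptiness of C and the convexity of A(Sol)
   only serve the existence of x_alpha and u^dagger, which are given here. *)
move=> ipP _ C_closed C_convex lam_gt0 A_smono A_lip _ A_weak F_weak AF_mono
  [x0 x0_sol] _ [xd xd_sol Axd] udag_min Axdag xa_sol.
have xdag_sol : GVI_sol ip A F C xdag.
  by rewrite -(strongly_monotone_inj ipP lam_gt0 A_smono (etrans Axd (esym Axdag))).
pose M := `|x0| + `|LA| * `|x0| / lam.
have M_ge0 : 0 <= M by rewrite /M addr_ge0 ?divr_ge0 ?mulr_ge0 ?normr_ge0 ?ltW.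
have xaM a : 0 < a -> `|xa a| <= M.
  move=> a_gt0; rewrite -[xa a](subrK x0) addrC; apply: le_trans (ler_normD _ _) _.
  rewrite lerD2l.
  exact: (regularized_sol_dist_le ipP lam_gt0 A_smono A_lip AF_mono a_gt0 (xa_sol _ a_gt0)).
split=> //.
- by exists M.
- apply: (regularized_sol_cvg ipP lam_gt0 A_smono AF_mono C_closed C_convex A_weak F_weak
    xa_sol xaM xdag_sol).
  by move=> x x_sol; rewrite Axdag; apply: udag_min; exists x.
exists (`|LA| * M / lam + 1); split => [|a b a_gt0 b_gt0].
  by apply: ltr_wpDl => //; apply: divr_ge0; [exact: mulr_ge0|exact: ltW].
apply: le_trans (regularized_sol_lipschitz ipP lam_gt0 A_smono A_lip AF_mono a_gt0 b_gt0 M_ge0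
  (xaM a a_gt0) (xa_sol a a_gt0) (xa_sol b b_gt0)) _.
apply: ler_wpM2r; first by rewrite invr_ge0 ltW.
by apply: ler_wpM2r; [exact: normr_ge0|rewrite lerDl].
Qed.
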